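(* Consider an imprecise hidden Markov model as in the context with fixed output sequence $o_{1:n}$, under the positivity assumption. Let $s\in\{2,\dots,n\}$, $\hat{x}_{s-1}\in\mathcal{X}_{s-1}$ and $x^*_{s:n}\in\mathcal{X}_{s:n}$. If $\alpha_{s-1}(\hat{x}_{s-1}\oplus x^*_{s:n})=\alpha^{\max}_{s-1}(\hat{x}_{s-1})$, then $x^*_{s:n}\in\mathrm{opt}(\mathcal{X}_{s:n}\mid\hat{x}_{s-1},o_{s:n})$.
   Context: Setting: $n\ge1$; $\mathcal{X}_0=\{x_0\}$ a singleton; finite non-empty $\mathcal{X}_1,\dots,\mathcal{X}_n$, $\mathcal{O}_1,\dots,\mathcal{O}_n$; $\mathcal{X}_{k:\ell}=\times_{r=k}^\ell\mathcal{X}_r$, similarly $\mathcal{O}_{k:\ell}$; $\oplus$ is concatenation. Coherent lower previsions $\underline{P}$: $\underline{P}(f)\ge\min f$, $\underline{P}(\lambda f)=\lambda\underline{P}(f)$ ($\lambda\ge0$), $\underline{P}(f+g)\ge\underline{P}(f)+\underline{P}(g)$; $\overline{P}(f)=-\underline{P}(-f)$; $\underline{P}(A)=\underline{P}(\mathbb{I}_A)$. Local models: coherent $\underline{Q}_k(\cdot\mid z_{k-1})$ on gambles on $\mathcal{X}_k$ and $\underline{S}_k(\cdot\mid z_k)$ on gambles on $\mathcal{O}_k$. Joint models: $\underline{E}_n(\cdot\mid z_n):=\underline{S}_n(\cdot\mid z_n)$; for $k<n$, $\underline{E}_k(\cdot\mid X_k)$ is the conditionally independent natural extension of $\underline{S}_k(\cdot\mid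 X_k)$ and $\underline{P}_{k+1}(\cdot\mid X_k)$ (pointwise smallest separately coherent conditional lower prevision on gambles on $\mathcal{X}_{k+1:n}\times\mathcal{O}_{k:n}$ jointly coherent with and extending both, with $O_k$ and $(X_{k+1:n},O_{k+1:n})$ mutually epistemically irrelevant given $X_k$); $\underline{P}_k(f\mid z_{k-1}):=\underline{Q}_k\big(\sum_{z_k}\mathbb{I}_{\{z_k\}}\underline{E}_k(f(z_k,\cdot)\mid z_k)\mid z_{k-1}\big)$. Positivity: $\overline{Q}_k(\{z_k\}\mid z_{k-1})>0$, $\overline{S}_k(\{o_k\}\mid z_k)>0$ always. $\mathrm{opt}(\mathcal{X}_{k:n}\mid z_{k-1},o_{k:n})$: the $\hat{x}_{k:n}$ with $\underline{P}_k(\mathbb{I}_{o_{k:n}}[\mathbb{I}_{x_{k:n}}-\mathbb{I}_{\hat{x}_{k:n}}]\mid z_{k-1})\le0$ for all $x_{k:n}\in\mathcal{X}_{k:n}$. $\alpha_k(z_{k:n}):=\overline{S}_k(\{o_k\}\mid z_k)\prod_{i=k+1}^n\overline{S}_i(\{o_i\}\mid z_i)\overline{Q}_i(\{z_i\}\mid z_{i-1})$ for $k\in\{1,\dots,n\}$; $\alpha^{\max}_k(x_k):=\max\{\alpha_k(z_{k:n}):z_{k:n}\in\mathcal{X}_{k:n},z_k=x_k\}$. *)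

From HB Require Import structures.
From mathcomp Require Import all_boot all_order all_algebra.
From mathcomp Require Import boolp classical_sets reals.
Set Implicit Arguments. Unset Strict Implicit. Unset Printing Implicit Defensive.
Import Order.TTheory GRing.Theory Num.Theory.
Local Open Scope ring_scope.
Local Open Scope classical_set_scope.

Section IHMM.
Variable R : realType.

(* (lower) previsions on gambles on a space A *)
Definition LP (A : Type) := (A -> R) -> R.

Definition coherent (A : Type) (P : LP A) : Prop :=
  [/\ (forall (f : A -> R) (c : R), (forall a, c <= f a) -> c <= P f),
      (forall (l : R) (f : A -> R), 0 <= l -> P (fun a => l * f a) = l * P f)
    & (forall f g : A -> R, P f + P g <= P (fun a => f a + g a))].

Definition upper (A : Type) (P : LP A) (f : A -> R) : R := - P (fun a => - f a).

Definition upr1 (A : eqType) (P : LP A) (a : A) : R :=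
  upper P (fun b => (b == a)%:R).

(* Independent natural extension (epistemic independence) of P1 on A and
   P2 on B: the natural extension of the conditional assessments
   P1(.|b) := P1 and P2(.|a) := P2 (mutual epistemic irrelevance). *)
Definition INE (A B : Type) (P1 : LP A) (P2 : LP B) : LP (A * B) :=
  fun f => sup [set mu : R | exists h1 h2 : A * B -> R,
    forall a b,
      (h1 (a, b) - P1 (fun a' => h1 (a', b)))
      + (h2 (a, b) - P2 (fun b' => h2 (a, b'))) <= f (a, b) - mu].

Variables (X O : nat -> finType).
Variable Q : forall k, X k.-1 -> LP (X k).
Variable S : forall k, X k -> LP (O k).

(* T k m = X_k x O_k x X_{k+1} x O_{k+1} x ... (m positions k..k+m-1) *)
Fixpoint T (k m : nat) : Type :=
  match m with 0 => unit | m'.+1 => (X k * (O k * T k.+1 m'))%type end.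

Fixpoint XS (k m : nat) : finType :=
  match m with 0 => (unit : finType) | m'.+1 => ((X k * XS k.+1 m')%type : finType) end.
Fixpoint OS (k m : nat) : finType :=
  match m with 0 => (unit : finType) | m'.+1 => ((O k * OS k.+1 m')%type : finType) end.

(* E_k(.|x_k) on gambles on O_k x X_{k+1:k+m} x O_{k+1:k+m};
   m = 0 corresponds to k = n (E_n = S_n). *)
Fixpoint Ej (k m : nat) {struct m} : X k -> LP (O k * T k.+1 m) :=
  match m return X k -> LP (O k * T k.+1 m) with
  | 0 => fun x g => S x (fun o => g (o, tt))
  | m'.+1 => fun x =>
      INE (S x) (fun h => @Q k.+1 x (fun y => @Ej k.+1 m' y (fun p => h (y, p))))
  end.

Definition Pj (k m : nat) (z : X k.-1) : LP (T k m.+1) :=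
  fun f => Q z (fun xk => @Ej k m xk (fun p => f (xk, p))).

Fixpoint matchX (k m : nat) : XS k m -> T k m -> bool :=
  match m return XS k m -> T k m -> bool with
  | 0 => fun _ _ => true
  | m'.+1 => fun xs t => (xs.1 == t.1) && matchX xs.2 t.2.2
  end.
Fixpoint matchO (k m : nat) : OS k m -> T k m -> bool :=
  match m return OS k m -> T k m -> bool with
  | 0 => fun _ _ => true
  | m'.+1 => fun os t => (os.1 == t.2.1) && matchO os.2 t.2.2
  end.

Definition opt (s m : nat) (z : X s.-1) (os : OS s m.+1) (xh : XS s m.+1) : Prop :=
  forall x : XS s m.+1,
    @Pj s m z (fun t => (matchO os t)%:R * ((matchX x t)%:R - (matchX xh t)%:R)) <= 0.

Fixpoint beta (s m : nat) : X s.-1 -> XS s m -> OS s m -> R :=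
  match m return X s.-1 -> XS s m -> OS s m -> R with
  | 0 => fun _ _ _ => 1
  | m'.+1 => fun prev xs os =>
      upr1 (S xs.1) os.1 * upr1 (Q prev) xs.1 * @beta s.+1 m' xs.1 xs.2 os.2
  end.

(* alpha_{s-1}(xh ⊕ xs) for observations oh = o_{s-1}, os = o_{s:n} *)
Definition alpha (s m : nat) (xh : X s.-1) (oh : O s.-1) (xs : XS s m) (os : OS s m) : R :=
  upr1 (S xh) oh * @beta s m xh xs os.

Definition alphamax (s m : nat) (xh : X s.-1) (oh : O s.-1) (os : OS s m) : R :=
  \big[Num.max/0]_(xs : XS s m) alpha xh oh xs os.

End IHMM.

(* Every coherent lower prevision on a finite space is dominated by a linear
   prevision (a mass function) that can be chosen to attain the upper
   probability of any prescribed atom: a finite Hahn-Banach argument, extending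
   a superlinear functional one direction at a time.  Taking such mass functions
   for all local models along the candidate sequence [xs] and mixing them gives,
   by induction from the last time step, a linear prevision [L] dominating
   [P_s(.|x_{s-1})] with [L(I_o I_x) <= beta(x)] for every state sequence [x]
   and [beta(xs) <= L(I_o I_{xs})], where [alpha_{s-1}(x_{s-1} ++ x)] is
   [beta(x)] times the positive factor [S_{s-1}({o_{s-1}}|x_{s-1})].  Hence
   [P_s(I_o (I_x - I_{xs})) <= beta(x) - beta(xs) <= 0] when [xs] maximises
   [alpha]. *)

From HB Require Import structures.
From mathcomp Require Import all_boot all_order all_algebra.
From mathcomp Require Import boolp classical_sets reals.
From mathcomp Require Import ring lra zify.
Set Implicit Arguments. Unset Strict Implicit. Unset Printing Implicit Defensive.
Import Order.TTheory GRing.Theory Num.Theory.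
Local Open Scope ring_scope.

Section SuperlinearExtension.
Variables (R : realType) (A : Type).

Definition superlinear (P : LP R A) :=
  (forall f g, P f + P g <= P (fun a => f a + g a)) /\
  (forall l f, 0 <= l -> P (fun a => l * f a) = l * P f).

Definition linear_along (P : LP R A) (e : A -> R) (c : R) :=
  forall f t, P (fun a => f a + t * e a) = P f + t * c.

Definition extend_along (P : LP R A) (e : A -> R) (c : R) : LP R A := fun f =>
  sup [set P (fun a => f a + t * e a) - t * c | t in [set: R]]%classic.

Lemma superlinear0 (P : LP R A) : superlinear P -> P (fun _ => 0) = 0.
Proof.
case=> _ homP; rewrite -[RHS](mul0r (P (fun _ => 0))) -homP //.
by congr P; apply: funext => a; rewrite mul0r.
Qed.

Lemma superlinear_opp (P : LP R A) f : superlinear P -> P f + P (fun a => - f a) <= 0.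
Proof.
move=> hP; apply: le_trans (hP.1 _ _) _.
by rewrite (_ : (fun a => f a + - f a) = fun _ => 0) ?superlinear0 // funeqE => a; rewrite subrr.
Qed.

Lemma extend_along_le (P : LP R A) e c f k :
  (forall t, P (fun a => f a + t * e a) - t * c <= k) -> extend_along P e c f <= k.
Proof.
move=> Hk; apply: ge_sup => [|_ [t _ <-] //].
by exists (P (fun a => f a + 0 * e a) - 0 * c), 0.
Qed.

Variables (P : LP R A) (e : A -> R) (c : R).
Hypotheses (hP : superlinear P) (Pe_le : P e <= c) (le_Pe : c <= - P (fun a => - e a)).

(* [P (t e) <= t c] for either sign of [t], by the two bounds on [c]. *)
Lemma extend_along_bounded f t : P (fun a => f a + t * e a) - t * c <= - P (fun a => - f a).
Proof.
have [addP homP] := hP.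
have Pte : P (fun a => t * e a) <= t * c.
  have [t0|t0] := leP 0 t; first by rewrite homP //; apply: ler_wpM2l.
  rewrite (_ : (fun a => t * e a) = fun a => - t * - e a); last first.
    by apply: funext => a; rewrite mulrNN.
  have nt0 : 0 <= - t by rewrite oppr_ge0 ltW.
  by rewrite homP // -[t * c]mulrNN; apply: ler_wpM2l; rewrite // lerNr.
have := addP (fun a => f a + t * e a) (fun a => - f a).
rewrite (_ : (fun a => f a + t * e a + - f a) = fun a => t * e a); first lra.
by apply: funext => a; rewrite addrAC subrr add0r.
Qed.

Lemma le_extend_along f t : P (fun a => f a + t * e a) - t * c <= extend_along P e c f.
Proof.
apply: ub_le_sup; last by exists t.
by exists (- P (fun a => - f a)) => _ [u _ <-]; apply: extend_along_bounded.
Qed.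

Lemma extend_along_ge f : P f <= extend_along P e c f.
Proof.
have := le_extend_along f 0; rewrite mul0r subr0.
by rewrite (_ : (fun a => f a + 0 * e a) = f) // funeqE => a; rewrite mul0r addr0.
Qed.

Lemma linear_along_extend : linear_along (extend_along P e c) e c.
Proof.
move=> f s; apply/eqP; rewrite eq_le; apply/andP; split.
  apply: extend_along_le => t; have := le_extend_along f (s + t).
  rewrite (_ : (fun a => f a + (s + t) * e a) = fun a => f a + s * e a + t * e a); first lra.
  by apply: funext => a; rewrite mulrDl addrA.
rewrite -lerBrDr; apply: extend_along_le => t.
have := le_extend_along (fun a => f a + s * e a) (t - s).
rewrite (_ : (fun a => f a + s * e a + (t - s) * e a) = fun a => f a + t * e a); first lra.
by apply: funext => a; ring.
Qed.

Lemma linear_along_extend_preserved e' c' :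
  linear_along P e' c' -> linear_along (extend_along P e c) e' c'.
Proof.
move=> lin' f s.
have swap t : P (fun a => f a + s * e' a + t * e a) = P (fun a => f a + t * e a) + s * c'.
  by rewrite -lin'; congr P; apply: funext => a; rewrite addrAC.
apply/eqP; rewrite eq_le; apply/andP; split.
  by apply: extend_along_le => t; have := le_extend_along f t; rewrite swap; lra.
rewrite -lerBrDr; apply: extend_along_le => t.
by have := le_extend_along (fun a => f a + s * e' a) t; rewrite swap; lra.
Qed.

Lemma superlinear_extend : superlinear (extend_along P e c).
Proof.
have [addP homP] := hP; split.
  move=> f g; rewrite -lerBrDr; apply: extend_along_le => t.
  rewrite lerBrDr addrC -lerBrDr; apply: extend_along_le => u.
  have := le_extend_along (fun a => f a + g a) (t + u).
  have := addP (fun a => f a + t * e a) (fun a => g a + u * e a).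
  rewrite (_ : (fun a => f a + t * e a + (g a + u * e a)) =
               fun a => f a + g a + (t + u) * e a); first lra.
  by apply: funext => a; rewrite mulrDl addrACA.
move=> l f; rewrite le0r => /orP[/eqP->|l0].
  rewrite mul0r (_ : (fun a => 0 * f a) = fun _ => 0); last by apply: funext => a; rewrite mul0r.
  apply/eqP; rewrite eq_le; apply/andP; split.
    apply: extend_along_le => t; have := extend_along_bounded (fun _ => 0) t.
    by rewrite oppr0 superlinear0 // oppr0.
  by have := extend_along_ge (fun _ => 0); rewrite superlinear0.
have l_ge0 := ltW l0.
apply/eqP; rewrite eq_le; apply/andP; split.
  apply: extend_along_le => t.
  have -> : P (fun a => l * f a + t * e a) = l * P (fun a => f a + t / l * e a).
    by rewrite -homP //; congr P; apply: funext => a; field; rewrite gt_eqF.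
  rewrite (_ : t * c = l * (t / l * c)); last by field; rewrite gt_eqF.
  by rewrite -mulrBr ler_pM2l // le_extend_along.
rewrite mulrC -ler_pdivlMr //; apply: extend_along_le => t; rewrite ler_pdivlMr //.
have := le_extend_along (fun a => l * f a) (l * t).
have -> : P (fun a => l * f a + l * t * e a) = l * P (fun a => f a + t * e a).
  by rewrite -homP //; congr P; apply: funext => a; ring.
by rewrite -mulrA -mulrBr mulrC.
Qed.

End SuperlinearExtension.

Section FiniteDomination.
Variable R : realType.

Definition ind1 (A : eqType) (a : A) : A -> R := fun b => (b == a)%:R.

Lemma sum_ind1 (A : finType) (r : A -> R) (b : A) : \sum_a r a * ind1 b a = r b.
Proof.
rewrite (bigD1 b) //= /ind1 eqxx mulr1 big1 ?addr0 // => a /negbTE ->.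
by rewrite mulr0.
Qed.

Lemma extend_along_seq (A : eqType) (s : seq A) (P : LP R A) : superlinear P ->
  exists P' : LP R A, [/\ superlinear P', (forall f, P f <= P' f),
    (forall a, a \in s -> exists c, linear_along P' (ind1 a) c) &
    (forall e c, linear_along P e c -> linear_along P' e c)].
Proof.
elim: s P => [|a s IH] P hP; first by exists P; split.
have Pa_le : P (ind1 a) <= - P (fun b => - ind1 a b) by have := superlinear_opp (ind1 a) hP; lra.
have [P' [hP' ge' lin' pres']] := IH _ (superlinear_extend hP (lexx _) Pa_le).
exists P'; split => // [f|b|e c lin].
- by apply: le_trans (extend_along_ge hP (lexx _) Pa_le f) (ge' f).
- rewrite inE => /orP[/eqP->|/lin'//].
  by exists (P (ind1 a)); apply/pres'/linear_along_extend.
- exact/pres'/linear_along_extend_preserved.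
Qed.

Lemma linear_along_value (A : Type) (P : LP R A) e c :
  P (fun _ => 0) = 0 -> linear_along P e c -> c = P e.
Proof.
move=> P0 /(_ (fun _ => 0) 1); rewrite P0 add0r !mul1r => <-.
by congr P; apply: funext => a; rewrite add0r mul1r.
Qed.

Lemma linear_along_ind1_expansion (A : finType) (P : LP R A) :
  P (fun _ => 0) = 0 -> (forall a, linear_along P (ind1 a) (P (ind1 a))) ->
  forall f, P f = \sum_a P (ind1 a) * f a.
Proof.
move=> P0 lin f.
have expand (s : seq A) :
    P (fun b => \sum_(a <- s) f a * ind1 a b) = \sum_(a <- s) P (ind1 a) * f a.
  elim: s => [|a s IHs].
    by rewrite big_nil -P0; congr P; apply: funext => b; rewrite big_nil.
  rewrite big_cons -IHs addrC mulrC -lin; congr P; apply: funext => b.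
  by rewrite big_cons addrC.
rewrite -expand; congr P; apply: funext => b.
by rewrite -[LHS](sum_ind1 f b); apply: eq_bigr => a _; rewrite /ind1 eq_sym.
Qed.

Lemma superlinear_linear_dominator (A : finType) (P : LP R A) (a0 : A) (c0 : R) :
  superlinear P -> P (ind1 a0) <= c0 -> c0 <= - P (fun a => - ind1 a0 a) ->
  exists r : A -> R, (forall f, P f <= \sum_a r a * f a) /\ r a0 = c0.
Proof.
move=> hP le_c0 c0_le.
have [P' [hP' ge' lin' pres']] := extend_along_seq (enum A) (superlinear_extend hP le_c0 c0_le).
have P'0 := superlinear0 hP'.
have lin a : linear_along P' (ind1 a) (P' (ind1 a)).
  by have [c hc] := lin' a (mem_enum _ a); rewrite -(linear_along_value P'0 hc).
exists (fun a => P' (ind1 a)); split => [f|].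
  rewrite -linear_along_ind1_expansion //.
  exact: le_trans (extend_along_ge hP le_c0 c0_le f) (ge' f).
by apply/esym/linear_along_value/pres'/linear_along_extend.
Qed.

Definition pmf (A : finType) (r : A -> R) := (forall a, 0 <= r a) /\ \sum_a r a = 1.

Lemma coherent_superlinear (A : Type) (P : LP R A) : coherent P -> superlinear P.
Proof. by case. Qed.

Lemma coherent_monotone (A : Type) (P : LP R A) f g :
  coherent P -> (forall a, f a <= g a) -> P f <= P g.
Proof.
case=> lowP _ addP fg; have := addP f (fun a => g a - f a).
rewrite (_ : (fun a => f a + (g a - f a)) = g); last by apply: funext => a; rewrite addrC subrK.
have : 0 <= P (fun a => g a - f a) by apply: lowP => a; rewrite subr_ge0.
lra.
Qed.

Lemma coherent_pmf_dominator (A : finType) (P : LP R A) (a0 : A) : coherent P ->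
  exists r : A -> R, [/\ pmf r, (forall f, P f <= \sum_a r a * f a),
    r a0 = upr1 P a0 & forall a, r a <= upr1 P a].
Proof.
move=> cohP; have hP := coherent_superlinear cohP; have [lowP _ _] := cohP.
have le_upr1 : P (ind1 a0) <= upr1 P a0.
  by have := superlinear_opp (ind1 a0) hP; rewrite /upr1 /upper; lra.
have [r [domr ra0]] := superlinear_linear_dominator hP le_upr1 (lexx _).
have r_upr1 a : r a <= upr1 P a.
  rewrite /upr1 /upper lerNr -(sum_ind1 r) -sumrN.
  by apply: le_trans (domr _) _; apply: ler_sum => b _; rewrite mulrN.
exists r; split => //; split.
  move=> a; rewrite -(sum_ind1 r); apply: le_trans (domr _).
  by apply: lowP => b; rewrite /ind1 ler0n.
have sum1 : \sum_a r a * 1 = \sum_a r a by apply: eq_bigr => a _; rewrite mulr1.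
have sumN1 : \sum_a r a * -1 = - \sum_a r a.
  by rewrite -sumrN; apply: eq_bigr => a _; rewrite mulrN1.
have := domr (fun _ => 1); have := domr (fun _ => -1); rewrite sum1 sumN1.
have : 1 <= P (fun _ => 1) by apply: lowP.
have : -1 <= P (fun _ => -1) by apply: lowP.
lra.
Qed.

End FiniteDomination.

Section LinearPrevision.
Variable R : realType.

Definition linear_prevision (B : Type) (L : LP R B) :=
  [/\ (forall f g, L (fun b => f b + g b) = L f + L g),
      (forall l f, L (fun b => l * f b) = l * L f),
      (forall f g, (forall b, f b <= g b) -> L f <= L g) &
      L (fun _ => 1) = 1].

Section Properties.
Variables (B : Type) (L : LP R B).
Hypothesis hL : linear_prevision L.

Lemma linear_prevision_const k : L (fun _ => k) = k.
Proof.
have [_ homL _ L1] := hL; rewrite -[RHS]mulr1 -L1 -homL.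
by congr L; apply: funext => b; rewrite mulr1.
Qed.

Lemma linear_previsionB f g : L (fun b => f b - g b) = L f - L g.
Proof.
have [addL homL _ _] := hL; rewrite addL -mulN1r -homL.
by congr (_ + L _); apply: funext => b; rewrite mulN1r.
Qed.

Lemma linear_prevision_sum (I : Type) (F : I -> B -> R) (s : seq I) :
  L (fun b => \sum_(i <- s) F i b) = \sum_(i <- s) L (F i).
Proof.
have [addL _ _ _] := hL; elim: s => [|i s IHs].
  by rewrite big_nil -[RHS](linear_prevision_const 0); congr L; apply: funext => b; rewrite big_nil.
rewrite big_cons -IHs -addL; congr L; apply: funext => b.
by rewrite big_cons.
Qed.

Lemma linear_prevision_ge0 f : (forall b, 0 <= f b) -> 0 <= L f.
Proof.
move=> f_ge0; have [_ _ monoL _] := hL.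
by rewrite -[X in X <= _](linear_prevision_const 0); apply: monoL.
Qed.

End Properties.

Definition mixture (A : finType) (B : Type) (r : A -> R) (L : A -> LP R B) : LP R (A * B) :=
  fun h => \sum_a r a * L a (fun b => h (a, b)).

Section Mixture.
Variables (A : finType) (B : Type) (r : A -> R) (L : A -> LP R B).
Hypotheses (pmf_r : pmf r) (hL : forall a, linear_prevision (L a)).

Lemma linear_prevision_mixture : linear_prevision (mixture r L).
Proof.
have [r_ge0 r1] := pmf_r; split.
- move=> f g; rewrite -big_split; apply: eq_bigr => a _ /=.
  by have [addL _ _ _] := hL a; rewrite -mulrDr -addL.
- move=> l f; rewrite mulr_sumr; apply: eq_bigr => a _.
  by have [_ homL _ _] := hL a; rewrite homL mulrCA.
- move=> f g fg; apply: ler_sum => a _; apply: ler_wpM2l => //.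
  by have [_ _ monoL _] := hL a; apply: monoL => b; apply: fg.
- by rewrite -[RHS]r1; apply: eq_bigr => a _; rewrite linear_prevision_const // mulr1.
Qed.

Lemma mixture_ind1 (a0 : A) (G : B -> R) :
  mixture r L (fun ab => (a0 == ab.1)%:R * G ab.2) = r a0 * L a0 G.
Proof.
have scale a : L a (fun b => (a0 == a)%:R * G b) = (a0 == a)%:R * L a G.
  by have [_ homL _ _] := hL a; rewrite homL.
rewrite /mixture (bigD1 a0) //= scale eqxx mul1r big1 ?addr0 // => a /negbTE.
by rewrite eq_sym scale => ->; rewrite mul0r mulr0.
Qed.

End Mixture.

Lemma marginal_le_mixture (A : finType) (B : Type) (P1 : LP R A) (P2 : A -> LP R B)
    (r : A -> R) (L : A -> LP R B) :
  coherent P1 -> (forall f, P1 f <= \sum_a r a * f a) -> (forall a f, P2 a f <= L a f) ->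
  forall f, P1 (fun a => P2 a (fun b => f (a, b))) <= mixture r L f.
Proof.
move=> cohP1 domP1 domP2 f; apply: le_trans (domP1 _).
by apply: coherent_monotone => // a; apply: domP2.
Qed.

Lemma INE_le_mixture (A : finType) (B : Type) (P1 : LP R A) (P2 : LP R B)
    (r : A -> R) (L2 : LP R B) :
  pmf r -> (forall f, P1 f <= \sum_a r a * f a) ->
  linear_prevision L2 -> (forall h, P2 h <= L2 h) ->
  forall f, INE P1 P2 f <= mixture r (fun _ => L2) f.
Proof.
move=> pmf_r domP1 hL2 domP2 f; have [r_ge0 r1] := pmf_r.
have [_ homL2 monoL2 _] := hL2.
set M := mixture r (fun _ => L2).
have hM : linear_prevision M by apply: linear_prevision_mixture.
have [addM _ monoM _] := hM.
apply: ge_sup.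
  exists (P1 (fun a => P2 (fun b => f (a, b)))).
  by exists (fun ab => P2 (fun b => f (ab.1, b))), f => a b /=; lra.
move=> mu [h1 [h2 H]].
have M_snd (g : B -> R) : M (fun ab => g ab.2) = L2 g.
  by rewrite /M /mixture /= -mulr_suml r1 mul1r.
have h1_part : M (fun ab => P1 (fun a => h1 (a, ab.2))) <= M h1.
  rewrite (M_snd (fun b => P1 (fun a => h1 (a, b)))).
  apply: le_trans (_ : L2 (fun b => \sum_a r a * h1 (a, b)) <= _).
    by apply: monoL2 => b; apply: domP1.
  by rewrite linear_prevision_sum //; apply: ler_sum => a _; rewrite homL2.
have h2_part : M (fun ab => P2 (fun b => h2 (ab.1, b))) <= M h2.
  apply: ler_sum => a _; apply: ler_wpM2l => //.
  by rewrite /= linear_prevision_const //; apply: domP2.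
have := monoM (fun ab => h1 ab - P1 (fun a => h1 (a, ab.2)) + (h2 ab - P2 (fun b => h2 (ab.1, b))))
  (fun ab => f ab - mu) (fun '(a, b) => H a b).
rewrite addM !linear_previsionB // linear_prevision_const //.
lra.
Qed.

Definition sharp_dominator (B I : Type) (P L : LP R B) (g : I -> B -> R) (b : I -> R)
    (i0 : I) :=
  [/\ linear_prevision L, (forall f, P f <= L f), (forall i, L (g i) <= b i)
    & b i0 <= L (g i0)].

Lemma sharp_dominator_argmax (B I : Type) (P L : LP R B) g (b : I -> R) i0 :
  sharp_dominator P L g b i0 -> (forall i, b i <= b i0) ->
  forall i, P (fun t => g i t - g i0 t) <= 0.
Proof.
case=> hL domP ub lb bmax i; apply: le_trans (domP _) _.
by rewrite linear_previsionB // subr_le0 (le_trans (ub i)) // (le_trans (bmax i)).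
Qed.

Lemma sharp_dominator_mixture (A : finType) (B I : Type) (P : LP R (A * B))
    (r u : A -> R) (L : A -> LP R B) (pick : I -> A) (G : I -> B -> R) (b : I -> R) (i0 : I) :
  pmf r -> (forall a, r a <= u a) -> r (pick i0) = u (pick i0) ->
  (forall a, linear_prevision (L a)) -> (forall f, P f <= mixture r L f) ->
  (forall i t, 0 <= G i t) -> (forall i, L (pick i) (G i) <= b i) ->
  b i0 <= L (pick i0) (G i0) ->
  sharp_dominator P (mixture r L) (fun i ab => (pick i == ab.1)%:R * G i ab.2)
    (fun i => u (pick i) * b i) i0.
Proof.
move=> pmf_r r_le r_i0 hL domP G_ge0 ub lb; have [r_ge0 _] := pmf_r.
split => [||i|]; rewrite ?mixture_ind1 //.
- exact: linear_prevision_mixture.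
- apply: ler_pM => //; first exact: linear_prevision_ge0.
- by rewrite r_i0; apply: ler_wpM2l; rewrite // -r_i0.
Qed.

End LinearPrevision.

Section HiddenMarkovModel.
Local Unset Implicit Arguments.
Variables (R : realType) (n : nat) (X O : nat -> finType).
Variables (Q : forall k, X k.-1 -> LP R (X k)) (S : forall k, X k -> LP R (O k)).
Hypotheses (cohQ : forall k (z : X k.-1), (1 <= k <= n)%N -> coherent (Q k z))
           (cohS : forall k (x : X k), (1 <= k <= n)%N -> coherent (S k x)).
Local Set Implicit Arguments.

Definition hit (k m : nat) (os : OS O k m) (xs : XS X k m) (t : T X O k m) : R :=
  (matchO os t && matchX xs t)%:R.

Lemma hit_cons k m (os : OS O k m.+1) (xs : XS X k m.+1) (y : X k) (p : O k * T X O k.+1 m) :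
  hit os xs (y, p) = (xs.1 == y)%:R * ((os.1 == p.1)%:R * hit os.2 xs.2 p.2).
Proof.
rewrite /hit /= -!natrM !mulnb.
by case: (xs.1 == y); case: (os.1 == p.1); rewrite ?andbF ?andbT.
Qed.

Lemma Pj_sharp_dominator k m (z : X k.-1) (os : OS O k m.+1) (xs : XS X k m.+1) :
  (1 <= k)%N -> (k + m <= n)%N ->
  (forall y, exists L, sharp_dominator (Ej Q S (m := m) y) L
     (fun x p => (os.1 == p.1)%:R * hit os.2 x p.2)
     (fun x => upr1 (S k y) os.1 * beta Q S (s := k.+1) y x os.2) xs.2) ->
  exists L, sharp_dominator (Pj Q S (m := m) z) L (hit os) (fun x => beta Q S z x os) xs.
Proof.
move=> k1 kmn /choice[L hL].
have [r [pmf_r domr r_xs r_le]] := coherent_pmf_dominator xs.1 (cohQ k z (ltac:(lia))).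
have mix := @sharp_dominator_mixture _ _ _ _ (Pj Q S (m := m) z) r _ L fst
  (fun x p => (os.1 == p.1)%:R * hit os.2 x.2 p.2)
  (fun x => upr1 (S k x.1) os.1 * beta Q S (s := k.+1) x.1 x.2 os.2) xs pmf_r r_le r_xs.
have hit_eq : hit os = fun x yp => (x.1 == yp.1)%:R * ((os.1 == yp.2.1)%:R * hit os.2 x.2 yp.2.2).
  by apply: funext => x; apply: funext => -[y p]; rewrite hit_cons.
have beta_eq : (fun x => beta Q S z x os) =
    fun x => upr1 (Q k z) x.1 * (upr1 (S k x.1) os.1 * beta Q S (s := k.+1) x.1 x.2 os.2).
  by apply: funext => x /=; ring.
exists (mixture r L); rewrite hit_eq beta_eq; apply: mix.
- by move=> y; case: (hL y).
- move=> f; apply: (marginal_le_mixture (cohQ k z (ltac:(lia))) domr) => y g.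
  by case: (hL y) => _ domL _ _; apply: domL.
- by move=> x p; apply: mulr_ge0; apply: ler0n.
- by move=> x; case: (hL x.1) => _ _ ub _; apply: ub.
- by case: (hL xs.1).
Qed.

Lemma Ej_sharp_dominator m : forall k (os : OS O k m.+1) (xs : XS X k.+1 m) (y : X k),
  (1 <= k)%N -> (k + m <= n)%N ->
  exists L, sharp_dominator (Ej Q S (m := m) y) L
     (fun x p => (os.1 == p.1)%:R * hit os.2 x p.2)
     (fun x => upr1 (S k y) os.1 * beta Q S (s := k.+1) y x os.2) xs.
Proof.
elim: m => [|m IH] k os xs y k1 kmn;
  have [r [pmf_r domr r_os r_le]] := coherent_pmf_dominator os.1 (cohS k y (ltac:(lia))).
  exists (mixture r (fun _ h => h tt)).
  apply: (sharp_dominator_mixture (pick := fun _ => os.1) pmf_r r_le r_os) => // f.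
  exact: domr.
have [L2 [linL2 domL2 ubL2 lbL2]] :=
  Pj_sharp_dominator (k := k.+1) (os := os.2) (xs := xs) y (ltac:(lia)) (ltac:(lia))
    (fun y' => IH k.+1 os.2 xs.2 y' (ltac:(lia)) (ltac:(lia))).
exists (mixture r (fun _ => L2)).
apply: (sharp_dominator_mixture (pick := fun _ => os.1) pmf_r r_le r_os) => // f.
exact: INE_le_mixture.
Qed.

End HiddenMarkovModel.

Theorem lemma5 (R : realType) (n : nat) (X O : nat -> finType)
  (Q : forall k, X k.-1 -> LP R (X k)) (S : forall k, X k -> LP R (O k)) :
  (0 < n)%N ->
  #|X 0%N| = 1%N ->
  (forall k, (1 <= k <= n)%N -> (0 < #|X k|)%N /\ (0 < #|O k|)%N) ->
  (forall k (z : X k.-1), (1 <= k <= n)%N -> coherent (Q k z)) ->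
  (forall k (x : X k), (1 <= k <= n)%N -> coherent (S k x)) ->
  (forall k (z : X k.-1) (x : X k), (1 <= k <= n)%N -> 0 < upr1 (Q k z) x) ->
  (forall k (x : X k) (o : O k), (1 <= k <= n)%N -> 0 < upr1 (S k x) o) ->
  forall (s : nat), (2 <= s <= n)%N ->
  forall (oh : O s.-1) (os : OS O s (n - s).+1)
         (xh : X s.-1) (xs : XS X s (n - s).+1),
    alpha Q S xh oh xs os = alphamax Q S xh oh os ->
    opt Q S xh os xs.
Proof.
move=> _ _ _ cohQ cohS _ posS s s_range oh os xh xs alpha_max x.
have [L domL] := Pj_sharp_dominator cohQ (k := s) (m := n - s) (os := os) (xs := xs) xh
  (ltac:(lia)) (ltac:(lia))
  (fun y => Ej_sharp_dominator cohQ cohS os xs.2 y (ltac:(lia)) (ltac:(lia))).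
have beta_max z : beta Q S xh z os <= beta Q S xh xs os.
  rewrite -(ler_pM2l (posS s.-1 xh oh (ltac:(lia)))).
  have : alpha Q S xh oh z os <= alphamax Q S xh oh os.
    exact: (le_bigmax 0 (fun z => alpha Q S xh oh z os)).
  by rewrite -alpha_max.
have := sharp_dominator_argmax domL beta_max x.
by congr (_ <= 0); congr Pj; apply: funext => t; rewrite mulrBr -!natrM !mulnb.
Qed.
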